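(* Let $T$ be a tree with diametral path $D = v_0 v_1\cdots v_d$. If for some $i$ there is a vertex $u \notin D$ protruding from $v_i$ with $d(u,v_i) = \ell > 2$ (i.e. a limb of length $\ell>2$ protrudes from $v_i$), then $T$ is not diametrical.
   Context: Let $G=(V,E)$ be a finite connected graph with distance $d(u,v)$, eccentricity $e(v)=\max_w d(v,w)$ and diameter $\mathrm{diam}(G)=\max_v e(v)$. A broadcast is a function $f: V\to\{0,\dots,\mathrm{diam}(G)\}$ with $f(v)\le e(v)$; its cost is $\sum_v f(v)$; it is dominating if every $u$ has some $v$ with $f(v)\ge 1$ and $d(u,v)\le f(v)$; a dominating broadcast is minimal if decreasing $f(v)$ for any $v$ with $f(v)>0$ destroys domination. $\Gamma_b(G)$ is the maximum cost of a minimal dominating broadcast, and $G$ is called diametrical if $\Gamma_b(G)=\mathrm{diam}(G)$. For a tree with fixed diametral path $D$, a vertex $u\notin D$ protrudes from $v_i\in D$ if $v_i$ is the vertex of $D$ closest to $u$. *)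

From mathcomp Require Import all_boot.
Set Implicit Arguments. Unset Strict Implicit. Unset Printing Implicit Defensive.

Section Graphs.
Variables (T : finType) (e : rel T).

Definition simple_graph : Prop := symmetric e /\ irreflexive e.

Definition walkb (n : nat) (u v : T) : bool :=
  [exists p : n.-tuple T, path e u p && (last u p == v)].

Definition connected_graph : Prop := forall u v : T, connect e u v.

Definition acyclic : Prop :=
  ~ exists c : seq T, [/\ uniq c, 2 < size c & cycle e c].

Definition tree : Prop := [/\ simple_graph, connected_graph & acyclic].

(* distance: least length of a walk (walks shorter than #|T| suffice in a
   connected graph) *)
Definition dist (u v : T) : nat := find (fun n => walkb n u v) (iota 0 #|T|).

Definition ecc (v : T) : nat := \max_(w : T) dist v w.
Definition diam : nat := \max_(v : T) ecc v.

Definition broadcastb (f : T -> nat) : bool := [forall v, f v <= ecc v].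
Definition cost (f : T -> nat) : nat := \sum_(v : T) f v.

Definition dominatingb (f : T -> nat) : bool :=
  [forall u, [exists v, (1 <= f v) && (dist u v <= f v)]].

Definition minimal_dominating_broadcastb (f : T -> nat) : bool :=
  [&& broadcastb f, dominatingb f &
      [forall v, [forall k : 'I_(f v),
         ~~ dominatingb (fun w => if w == v then val k else f w)]]].

(* Every broadcast takes values <= ecc <= #|T|, so all broadcasts are
   represented by {ffun T -> 'I_#|T|.+1}. *)
Definition Gamma_b : nat :=
  \max_(f : {ffun T -> 'I_#|T|.+1}
          | minimal_dominating_broadcastb (fun v => val (f v)))
     cost (fun v => val (f v)).

Definition diametrical : Prop := Gamma_b = diam.

Definition diametral_path (v0 : T) (rest : seq T) : Prop :=
  [/\ path e v0 rest, uniq (v0 :: rest), size rest = diam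
    & dist v0 (last v0 rest) = diam].

Definition protrudes_from (D : seq T) (u vi : T) : Prop :=
  [/\ u \notin D, vi \in D & forall x, x \in D -> x != vi -> dist u vi < dist u x].

End Graphs.

From mathcomp Require Import all_boot zify.
Set Implicit Arguments. Unset Strict Implicit. Unset Printing Implicit Defensive.

(* Let D = v0 ... vd be the diametral path (d = diam) and P = vi ... u the limb, of length
   l > 2.  As D is diametral, vi lies at distance at least l from both v0 and vd.  Give v0
   strength d(v0,vi) - 1, vd strength d(vd,vi) - 1, u strength l, and strength 1 to every
   vertex off D u P: this broadcast dominates, and below it lies a minimal dominating
   broadcast g.  The d + l + 1 vertices of D u P must all hear g.  In a tree, v0, vd and u
   each reach at most g + 1 of them (those on the unique path leaving them within range),
   and any other broadcaster lies off D u P with strength 1, so it is adjacent to at most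
   one of them since D u P is connected and the tree has no cycle.  Hence
   Gamma_b >= cost g >= d + l - 2 > d. *)

Lemma rev_belast_cons (T : Type) (x : T) p : last x p :: rev (belast x p) = rev (x :: p).
Proof. by rewrite [in RHS]lastI rev_rcons. Qed.

Lemma last_rev_belast (T : Type) (x : T) p : last (last x p) (rev (belast x p)) = x.
Proof. by elim: p x => //= a p IH x; rewrite rev_cons last_rcons. Qed.

Section Distance.
Variables (T : finType) (e : rel T).
Local Notation dist := (dist e).

Lemma walkP n u v :
  reflect (exists p, [/\ size p = n, path e u p & last u p = v]) (walkb e n u v).
Proof.
apply: (iffP existsP) => [[t /andP[pt /eqP <-]]|[p [sp pp <-]]].
  by exists (tval t); rewrite size_tuple.
have sz : size p == n by rewrite sp.
by exists (Tuple sz); rewrite /= pp eqxx.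
Qed.

Lemma dist_le_card u v : dist u v <= #|T|.
Proof. by rewrite /dist -[X in _ <= X](size_iota 0) find_size. Qed.

Lemma dist_min u p : path e u p -> dist u (last u p) <= size p.
Proof.
move=> pp; have [lt|] := ltnP (size p) #|T|; last exact: leq_trans (dist_le_card _ _).
rewrite leqNgt; apply/negP => /(before_find 0).
rewrite nth_iota // add0n => /negbT/negP; apply; apply/walkP; by exists p.
Qed.

Lemma dist0 u : dist u u = 0.
Proof. by apply/eqP; rewrite -leqn0 (@dist_min u [::]). Qed.

Lemma dist_le_ecc u v : dist u v <= ecc e u.
Proof. exact: (leq_bigmax (F := dist u)). Qed.

Lemma ecc_le_diam u : ecc e u <= diam e.
Proof. exact: (leq_bigmax (F := ecc e)). Qed.

Lemma dist_le_diam u v : dist u v <= diam e.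
Proof. exact: leq_trans (dist_le_ecc u v) (ecc_le_diam u). Qed.

Lemma ecc_le_card u : ecc e u <= #|T|.
Proof. by apply/bigmax_leqP => v _; apply: dist_le_card. Qed.

Lemma geodesic_uniq u p : path e u p -> dist u (last u p) = size p -> uniq (u :: p).
Proof.
move=> pp dp; case: (shortenP pp) dp => p' pp' up' sub dp.
apply: (leq_size_uniq up') => [y|].
  by rewrite !inE => /predU1P[->|/sub ->]; rewrite ?eqxx ?orbT.
by rewrite /= ltnS -dp dist_min.
Qed.

Lemma dist_on_path_le x s y :
  path e x s -> y \in x :: s -> dist x y + dist y (last x s) <= size s.
Proof.
move=> pxs ys; case/splitPl: ys pxs => s1 s2 ly; rewrite cat_path last_cat ly => /andP[p1 p2].
by rewrite size_cat leq_add //; [rewrite -{1}ly|]; apply: dist_min.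
Qed.

Hypothesis econn : connected_graph e.

Lemma walkb_dist u v : walkb e (dist u v) u v.
Proof.
have /connectP[p /shortenP[p' pp' up' _] ->] := econn u v.
have lt : size (u :: p') <= #|T| by rewrite -(card_uniqP up') max_card.
have hw : has (fun n => walkb e n u (last u p')) (iota 0 #|T|).
  by apply/hasP; exists (size p'); rewrite ?mem_iota //; apply/walkP; exists p'.
by have := nth_find 0 hw; rewrite nth_iota // -[X in _ < X](size_iota 0) -has_find.
Qed.

Lemma exists_geodesic u v : exists p, [/\ size p = dist u v, path e u p & last u p = v].
Proof. exact/walkP/walkb_dist. Qed.

Lemma dist_eq0 u v : dist u v = 0 -> u = v.
Proof. by move=> d0; have := walkb_dist u v; rewrite d0 => /walkP[p [+ _ <-]]; case: p. Qed.

Lemma edge_dist1 u v : dist u v = 1 -> e u v.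
Proof.
move=> d1; have := walkb_dist u v; rewrite d1 => /walkP[p [+ + <-]].
by case: p => [|a [|]] //= _; rewrite andbT.
Qed.

Lemma dist_triangle u v w : dist u w <= dist u v + dist v w.
Proof.
have [p [<- pp <-]] := exists_geodesic u v.
have [q [<- pq <-]] := exists_geodesic (last u p) w.
by rewrite -size_cat -last_cat dist_min // cat_path pp pq.
Qed.

Hypothesis sym_e : symmetric e.

Lemma path_rev_belast x p : path e x p -> path e (last x p) (rev (belast x p)).
Proof. by rewrite rev_path (@eq_path _ _ e) // => a b; rewrite /= sym_e. Qed.

Lemma dist_sym u v : dist u v = dist v u.
Proof.
suff le a b : dist a b <= dist b a by apply/eqP; rewrite eqn_leq !le.
have [p [<- pp <-]] := exists_geodesic b a.
have := dist_min (path_rev_belast pp).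
by rewrite size_rev size_belast last_rev_belast.
Qed.

End Distance.

Lemma uniq_path_prefix (T : eqType) (e : rel T) x s y :
  path e x s -> uniq (x :: s) -> y \in x :: s ->
  exists s1, [/\ path e x s1, uniq (x :: s1), last x s1 = y & {subset s1 <= s}].
Proof.
move=> + + ys; case/splitPl: ys => s1 s2 <-.
rewrite cat_path -cat_cons cat_uniq => /andP[p1 _] /andP[u1 _].
by exists s1; split=> // w ws1; rewrite mem_cat ws1.
Qed.

Section Tree.
Variables (T : finType) (e : rel T).
Hypothesis Htree : tree e.
Local Notation dist := (dist e).

Let sym_e : symmetric e. Proof. by case: Htree => -[]. Qed.
Let econn : connected_graph e. Proof. by case: Htree. Qed.
Let acyc : acyclic e. Proof. by case: Htree. Qed.

Lemma uniq_paths_disjoint x p q : path e x p -> path e x q ->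
  uniq (x :: p) -> uniq (x :: q) -> head x p != head x q -> ~~ has (mem q) p.
Proof.
move=> pp pq up uq hd; apply/negP => hs.
case: (split_find_nth x hs) pp up hd => z p1 p2 zq np1 pp up hd.
case/splitPr: zq pq uq hd np1 => q1 q2 pq uq hd np1.
move: pp; rewrite cat_path => /andP[pp1 _].
move: pq; rewrite -cat_rcons cat_path => /andP[pq1 _].
move: up; rewrite -cat_cons cat_uniq => /andP[up1 _].
move: uq; rewrite -cat_rcons -cat_cons cat_uniq => /andP[uq1 _].
apply: acyc; exists (x :: rcons p1 z ++ rev q1); split.
- rewrite -cat_cons cat_uniq up1 rev_uniq.
  move: uq1; rewrite -cats1 -cat_cons cat_uniq cons_uniq.
  move=> /andP[/andP[xq1 uq1] /andP[]]; rewrite /= orbF inE negb_or => /andP[_ zq1] _.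
  rewrite (uq1 : uniq q1) andbT; apply/hasPn => y; rewrite mem_rev => yq1.
  rewrite !inE mem_rcons inE negb_or; apply/andP; split.
    by apply: contraNneq xq1 => <-.
  apply/norP; split; first by apply: contraNneq zq1 => <-.
  by apply: contraNN np1 => yp1; apply/hasP; exists y => //=; rewrite mem_cat yq1.
- case: p1 q1 hd {np1 pp1 pq1 up1 uq1} => [|a p1] [|b q1] //=;
    by rewrite ?eqxx // ?size_cat ?size_rev ?size_rcons /= => _; lia.
- rewrite /= rcons_cat cat_path pp1 last_rcons -rev_cons.
  by have := path_rev_belast sym_e pq1; rewrite last_rcons belast_rcons.
Qed.

Lemma uniq_path_unique x p q : path e x p -> path e x q ->
  uniq (x :: p) -> uniq (x :: q) -> last x p = last x q -> p = q.
Proof.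
elim: p x q => [|a p IH] x [|b q] //=.
- by move=> _ _ _ /andP[+ _] lx; rewrite lx mem_last.
- by move=> _ _ /andP[+ _] _ lx; rewrite -lx mem_last.
move=> /andP[ea pa] /andP[eb pb] ua ub l.
have [ab|ab] := eqVneq a b.
  subst b; case/andP: ua => _ ua; case/andP: ub => _ ub.
  by congr (_ :: _); apply: (IH a).
have := @uniq_paths_disjoint x (a :: p) (b :: q); rewrite /= ea pa eb pb.
move=> /(_ isT isT ua ub ab) /negP disj; exfalso; apply: disj.
apply/(@hasP _ _ (a :: p)); exists (last a p); first exact: mem_last.
by change (last a p \in b :: q); rewrite l mem_last.
Qed.

Lemma uniq_path_dist x p : path e x p -> uniq (x :: p) -> dist x (last x p) = size p.
Proof.
move=> pp up; have [g [sg pg lg]] := exists_geodesic econn x (last x p).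
have ug : uniq (x :: g) by apply: (geodesic_uniq pg); rewrite lg.
by rewrite -sg (uniq_path_unique pp pg up ug) ?lg.
Qed.

Lemma dist_on_uniq_path x s y : path e x s -> uniq (x :: s) -> y \in x :: s ->
  dist x y = index y (x :: s).
Proof.
move=> + + ys; case/splitPl: ys => s1 s2 <-.
rewrite cat_path -cat_cons cat_uniq => /andP[p1 _] /andP[u1 _].
by rewrite uniq_path_dist // index_cat mem_last index_last.
Qed.

Lemma card_ball_on_uniq_path x s k : path e x s -> uniq (x :: s) ->
  #|[set y | (y \in x :: s) && (dist x y <= k)]| <= k.+1.
Proof.
move=> ps us; apply: (@leq_trans #|take k.+1 (x :: s)|).
  apply/subset_leq_card/subsetP => y; rewrite inE => /andP[ys dy].
  by rewrite in_take // -(dist_on_uniq_path ps us ys) ltnS.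
by apply: leq_trans (card_size _) _; rewrite size_take_min geq_minl.
Qed.

Section Junction.
Variables (a z : T) (s q : seq T).
Hypotheses (pas : path e a s) (uas : uniq (a :: s)).
Hypotheses (pzq : path e z q) (uzq : uniq (z :: q)).
Hypothesis zas : z \in a :: s.
Hypothesis junction : {in a :: s, forall w, w \in z :: q -> w = z}.

Lemma dist_through_junction y : y \in z :: q -> dist a y = dist a z + dist z y.
Proof.
move=> yq.
have [s1 [ps1 us1 lz s1s]] := uniq_path_prefix pas uas zas.
have [q1 [pq1 uq1 ly q1q]] := uniq_path_prefix pzq uzq yq.
have -> : dist a z = size s1 by rewrite -lz uniq_path_dist.
have -> : dist z y = size q1 by rewrite -ly uniq_path_dist.
rewrite -size_cat -ly -{1}lz -last_cat uniq_path_dist ?cat_path ?ps1 ?lz //.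
move: uq1; rewrite cons_uniq => /andP[zq1 uq1'].
rewrite -cat_cons cat_uniq us1 uq1' andbT; apply/hasPn => w wq1; apply/negP => ws1.
have wz : w = z.
  apply: junction; last by rewrite inE q1q ?orbT.
  by move: ws1; rewrite !inE => /predU1P[->|/s1s ->]; rewrite ?eqxx ?orbT.
by move: zq1; rewrite -wz wq1.
Qed.

Lemma card_ball_junction k : k < dist a z ->
  #|[set y | ((y \in a :: s) || (y \in z :: q)) && (dist a y <= k)]| <= k.+1.
Proof.
move=> kz; apply: leq_trans (card_ball_on_uniq_path k pas uas).
apply/subset_leq_card/subsetP => y; rewrite !inE => /andP[/orP[ys|yq] dy].
  by rewrite ys dy.
by move: dy; rewrite (dist_through_junction yq) leqNgt (ltn_addr _ kz).
Qed.

End Junction.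

Lemma acyclic_unique_neighbour (A : {pred T}) x y1 y2 : x \notin A -> y1 \in A ->
  e x y1 -> e x y2 -> connect [rel a b in A | e a b] y1 y2 -> y1 = y2.
Proof.
move=> xA y1A e1 e2 /connectP[p pp ly2]; rewrite ly2 in e2 *.
case: (shortenP pp) e2 => q pq uq _ e2.
have qA : all [in A] (y1 :: q).
  elim: q (y1) y1A pq {uq e2} => [|b q IH] a aA /=; rewrite aA //.
  by case/andP=> /andP[/andP[_ bA] _] /(IH b bA).
case: q pq uq qA e2 => [//|b q] pq uq qA e2.
have pe : path e y1 (b :: q) by apply: sub_path pq => ? ? /andP[].
case: acyc; exists (x :: y1 :: b :: q); split => //.
  by rewrite cons_uniq uq andbT; apply: contra xA => /(allP qA).
by move: pe; rewrite /= e1 rcons_path => /andP[-> ->]; rewrite sym_e e2.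
Qed.

End Tree.

Lemma card_bigcup_le (T I : finType) (P : pred I) (F : I -> {set T}) :
  #|\bigcup_(i | P i) F i| <= \sum_(i | P i) #|F i|.
Proof.
elim/big_rec2: _ => [|i A n _ IH]; first by rewrite cards0.
by rewrite cardsU; apply: leq_trans (leq_subr _ _) _; rewrite leq_add2l.
Qed.

Section Broadcast.
Variables (T : finType) (e : rel T).
Implicit Types f g : T -> nat.

Lemma eq_broadcastb f g : f =1 g -> broadcastb e f = broadcastb e g.
Proof. by move=> fg; apply: eq_forallb => v; rewrite fg. Qed.

Lemma eq_dominatingb f g : f =1 g -> dominatingb e f = dominatingb e g.
Proof. by move=> fg; apply: eq_forallb => u; apply: eq_existsb => v; rewrite fg. Qed.

Lemma eq_minimal_dominating_broadcastb f g : f =1 g ->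
  minimal_dominating_broadcastb e f = minimal_dominating_broadcastb e g.
Proof.
move=> fg; rewrite /minimal_dominating_broadcastb (eq_broadcastb fg) (eq_dominatingb fg).
congr [&& _, _ & _]; apply: eq_forallb => v; rewrite fg; apply: eq_forallb => k.
by congr (~~ _); apply: eq_dominatingb => w; rewrite fg.
Qed.

Lemma cost_le_Gamma_b g : minimal_dominating_broadcastb e g -> cost g <= Gamma_b e.
Proof.
move=> mg; have /and3P[/forallP bg _ _] := mg.
have gT v : g v < #|T|.+1 by rewrite ltnS (leq_trans (bg v)) ?ecc_le_card.
pose gF : {ffun T -> 'I_#|T|.+1} := [ffun v => Ordinal (gT v)].
have gFE : (fun v => val (gF v)) =1 g by move=> v; rewrite ffunE.
have -> : cost g = cost (fun v => val (gF v)) by apply: eq_bigr => v _; rewrite gFE.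
apply: (leq_bigmax_cond (F := fun f : {ffun T -> 'I_#|T|.+1} => cost (fun v => val (f v)))).
by rewrite (eq_minimal_dominating_broadcastb gFE).
Qed.

Lemma exists_minimal_dominating_below f : broadcastb e f -> dominatingb e f ->
  exists2 g, minimal_dominating_broadcastb e g & forall v, g v <= f v.
Proof.
have [n] := ubnP (cost f); elim: n f => // n IH f cfn bf df.
case mf: (minimal_dominating_broadcastb e f); first by exists f.
move: mf; rewrite /minimal_dominating_broadcastb bf df /=.
move=> /negbT/forallPn[v /forallPn[k /negPn dk]].
pose f' w := if w == v then val k else f w.
have f'f w : f' w <= f w by rewrite /f'; case: eqP => [->|//]; apply/ltnW/ltn_ord.
have [||g mg gf'] := IH f' _ _ dk.
- rewrite -ltnS (leq_trans _ cfn) // ltnS /cost (bigD1 v) //= [X in _ < X](bigD1 v) //=.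
  by rewrite /f' eqxx (eq_bigr f) => [|w /negbTE -> //]; rewrite ltn_add2r ltn_ord.
- by apply/forallP => w; rewrite (leq_trans (f'f w)) //; apply: (forallP bf).
by exists g => // w; apply: leq_trans (gf' w) (f'f w).
Qed.

Lemma Gamma_b_ge f c : broadcastb e f -> dominatingb e f ->
  (forall g, dominatingb e g -> (forall v, g v <= f v) -> c <= cost g) ->
  c <= Gamma_b e.
Proof.
move=> bf df lb; have [g mg gf] := exists_minimal_dominating_below bf df.
by apply: leq_trans (cost_le_Gamma_b mg); apply: lb gf; case/and3P: mg.
Qed.

Definition ball x k := [set y | dist e x y <= k].

Lemma card_le_sum_ball (A : {set T}) g : symmetric e -> connected_graph e ->
  dominatingb e g -> #|A| <= \sum_(x | 0 < g x) #|A :&: ball x (g x)|.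
Proof.
move=> sym_e econn /forallP dg; apply: leq_trans (card_bigcup_le _ _).
apply/subset_leq_card/subsetP => y yA; have /existsP[x /andP[gx dyx]] := dg y.
by apply/bigcupP; exists x; rewrite // !inE yA (dist_sym econn sym_e).
Qed.

End Broadcast.

Section Limb.
Variables (T : finType) (e : rel T) (v0 : T) (rest : seq T) (u vi : T) (p : seq T).
Hypothesis Htree : tree e.
Hypothesis diametralD : diametral_path e v0 rest.
Hypothesis protrudes : protrudes_from e (v0 :: rest) u vi.
Hypotheses (pp : path e vi p) (lp : last vi p = u) (geo : dist e vi u = size p).
Hypothesis long : 2 < size p.

Local Notation D := (v0 :: rest).
Local Notation P := (vi :: p).
Local Notation vd := (last v0 rest).
Local Notation l := (size p).
Local Notation dist := (dist e).

Let sym_e : symmetric e. Proof. by case: Htree => -[]. Qed.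
Let econn : connected_graph e. Proof. by case: Htree. Qed.
Let pD : path e v0 rest. Proof. by case: diametralD. Qed.
Let uD : uniq D. Proof. by case: diametralD. Qed.
Let sizeD : size rest = diam e. Proof. by case: diametralD. Qed.
Let distD : dist v0 vd = diam e. Proof. by case: diametralD => _ _ _ ->. Qed.
Let viD : vi \in D. Proof. by case: protrudes. Qed.
Let uP : uniq P. Proof. by apply: (geodesic_uniq pp); rewrite lp. Qed.
Let uinP : u \in P. Proof. by rewrite -lp mem_last. Qed.

Lemma dist_limb_le y : y \in P -> dist y u <= l.
Proof. by move=> yP; have := dist_on_path_le pp yP; rewrite lp; lia. Qed.

Lemma limb_meets_path_at_root : {in D, forall w, w \in P -> w = vi}.
Proof.
move=> w wD wP; apply/eqP; apply: contraT => wvi.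
case: protrudes => _ _ /(_ w wD wvi).
by rewrite !(dist_sym econn sym_e u) geo ltnNge dist_limb_le.
Qed.

Definition limb_support : {set T} := [set y | (y \in D) || (y \in P)].
Local Notation S := limb_support.

Lemma in_limb_support y : (y \in S) = (y \in D) || (y \in P).
Proof. by rewrite in_set. Qed.

Section DiametralEnd.
Variables (a : T) (s : seq T).
Hypotheses (pas : path e a s) (uas : uniq (a :: s)) (asD : a :: s =i D).

Let viD' : vi \in a :: s. Proof. by rewrite asD. Qed.

Let junction : {in a :: s, forall w, w \in P -> w = vi}.
Proof. by move=> w; rewrite asD; apply: limb_meets_path_at_root. Qed.

Lemma dist_end_root_add_le : dist a vi + l <= diam e.
Proof.
by rewrite -geo -(dist_through_junction Htree pas uas pp uP viD' junction uinP) dist_le_diam.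
Qed.

Lemma card_limb_ball_end k : k < dist a vi -> #|S :&: ball e a k| <= k.+1.
Proof.
move=> kvi; apply: leq_trans (card_ball_junction Htree pas uas pp uP viD' junction kvi).
by apply/subset_leq_card/subsetP => y; rewrite !in_set asD.
Qed.

End DiametralEnd.

Let pD' : path e vd (rev (belast v0 rest)). Proof. exact: path_rev_belast. Qed.
Let uD' : uniq (vd :: rev (belast v0 rest)). Proof. by rewrite rev_belast_cons rev_uniq. Qed.
Let D'D : vd :: rev (belast v0 rest) =i D. Proof. by move=> y; rewrite rev_belast_cons mem_rev. Qed.

Lemma limb_le_dist_v0 : l <= dist v0 vi.
Proof.
have := dist_end_root_add_le pD' uD' D'D; have := dist_triangle econn v0 vi vd.
by rewrite distD (dist_sym econn sym_e vi); lia.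
Qed.

Lemma limb_le_dist_vd : l <= dist vd vi.
Proof.
have := dist_end_root_add_le pD uD (frefl _); have := dist_triangle econn v0 vi vd.
by rewrite distD (dist_sym econn sym_e vi); lia.
Qed.

Lemma v0_neq_vd : v0 != vd.
Proof.
apply: contraTneq long => v0vd.
have diam0 : diam e = 0 by rewrite -distD -v0vd dist0.
by have := dist_end_root_add_le pD uD (frefl _); rewrite diam0; lia.
Qed.

Lemma u_notin_D : u \notin D.
Proof. by case: protrudes. Qed.

Lemma dist_v0_add_dist_vd y : y \in D -> dist v0 y + dist y vd = diam e.
Proof.
move=> yD; apply/eqP; rewrite eqn_leq -{1}sizeD dist_on_path_le //=.
by rewrite -distD dist_triangle.
Qed.

Definition limb_broadcast x : nat :=
  if x == v0 then (dist v0 vi).-1 else if x == vd then (dist vd vi).-1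
  else if x == u then l else x \notin S.
Local Notation fb := limb_broadcast.

Lemma limb_broadcast_v0 : fb v0 = (dist v0 vi).-1.
Proof. by rewrite /fb eqxx. Qed.

Lemma limb_broadcast_vd : fb vd = (dist vd vi).-1.
Proof. by rewrite /fb eq_sym (negbTE v0_neq_vd) eqxx. Qed.

Lemma limb_broadcast_u : fb u = l.
Proof.
have [uv0 uvd] : u != v0 /\ u != vd.
  by split; apply: contraNneq u_notin_D => ->; rewrite ?mem_head ?mem_last.
by rewrite /fb (negbTE uv0) (negbTE uvd) eqxx.
Qed.

Lemma limb_broadcast_out x : x \notin S -> fb x = 1.
Proof.
move=> xS; rewrite /fb xS.
have [x_hub|] := boolP [|| x == v0, x == vd | x == u]; last by do 3!case: eqP.
by move: xS; case/or3P: x_hub => /eqP->; rewrite in_limb_support ?mem_head ?mem_last ?uinP ?orbT.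
Qed.

Lemma limb_broadcast_broadcast : broadcastb e fb.
Proof.
apply/forallP => x; rewrite /fb.
case: eqP => [->|_]; first exact: leq_trans (leq_pred _) (dist_le_ecc _ _ _).
case: eqP => [->|_]; first exact: leq_trans (leq_pred _) (dist_le_ecc _ _ _).
case: eqP => [->|xu]; first by rewrite -geo (dist_sym econn sym_e) dist_le_ecc.
case: (x \in S) => //=; apply: leq_trans (dist_le_ecc _ x u).
by rewrite lt0n; apply/eqP => /(dist_eq0 econn).
Qed.

Lemma limb_broadcast_dominating : dominatingb e fb.
Proof.
apply/forallP => y; apply/existsP.
have [yS|yS] := boolP (y \in S); last by exists y; rewrite limb_broadcast_out // dist0.
have [yP|yPn] := boolP (y \in P).
  by exists u; rewrite limb_broadcast_u dist_limb_le // (ltnW (ltnW long)).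
have yD : y \in D by move: yS; rewrite in_limb_support (negbTE yPn) orbF.
have cover w r : 1 < r -> fb w = r.-1 -> dist w y < r -> (0 < fb w) && (dist y w <= fb w).
  move=> r1 -> wy; rewrite ltn_predRL r1 (dist_sym econn sym_e y) -ltnS prednK //.
  exact: ltnW.
have := dist_v0_add_dist_vd yD; have := dist_v0_add_dist_vd viD.
rewrite (dist_sym econn sym_e y vd) (dist_sym econn sym_e vi vd) => sum_vi sum_y.
case: (ltnP (dist v0 y) (dist v0 vi)) => [lt|ge].
  exists v0; apply: cover lt; rewrite ?limb_broadcast_v0 //.
  exact: ltnW (leq_trans long limb_le_dist_v0).
case: (ltnP (dist vd y) (dist vd vi)) => [lt'|ge'].
  exists vd; apply: cover lt'; rewrite ?limb_broadcast_vd //.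
  exact: ltnW (leq_trans long limb_le_dist_vd).
have : dist v0 y = dist v0 vi.
  apply/eqP; rewrite eqn_leq ge andbT -(leq_add2r (dist vd y)) sum_y -sum_vi.
  by rewrite leq_add2l.
rewrite !(dist_on_uniq_path Htree pD uD) // => /(index_inj v0 yD viD) yvi.
by move: yPn; rewrite yvi mem_head.
Qed.

Lemma card_limb_support : #|S| = diam e + l + 1.
Proof.
have -> : S = [set y in D] :|: [set y in P].
  by apply/setP => y; rewrite in_limb_support in_setU !in_set.
rewrite cardsU; have -> : [set y in D] :&: [set y in P] = [set vi].
  apply/setP => y; rewrite in_setI !in_set in_set1.
  apply/andP/eqP => [[yD yP]|->]; first exact: limb_meets_path_at_root.
  by rewrite viD mem_head.
rewrite cards1 !cardsE (card_uniqP uD) (card_uniqP uP) /= sizeD.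
by rewrite addnS subn1 addSn addn1.
Qed.

Lemma card_limb_ball_tip k : k <= l -> #|S :&: ball e u k| <= k.+1.
Proof.
move=> kl; have := path_rev_belast sym_e pp; rewrite lp => pP'.
have uP' : uniq (u :: rev (belast vi p)) by rewrite -lp rev_belast_cons rev_uniq.
apply: leq_trans (card_ball_on_uniq_path Htree k pP' uP').
apply/subset_leq_card/subsetP => y; rewrite !in_set -lp rev_belast_cons mem_rev lp.
case/andP=> /orP[yD|->] // dy; rewrite dy andbT.
have [yP|yPn] := boolP (y \in P) => //; case: protrudes => _ _ /(_ y yD).
have yvi : y != vi by apply: contraNneq yPn => ->; rewrite mem_head.
by move=> /(_ yvi); rewrite (dist_sym econn sym_e u vi) geo ltnNge (leq_trans dy kl).
Qed.

Lemma limb_support_connected y1 y2 : y1 \in S -> y2 \in S ->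
  connect [rel a b in S | e a b] y1 y2.
Proof.
set R := [rel a b in S | e a b].
have Rsym : connect_sym R.
  by apply: sym_connect_sym => a b; rewrite /R /= sym_e; congr (_ && _); apply: andbC.
have eR : {in S &, subrel e R} by move=> a b aS bS eab; rewrite /R /= aS bS.
have pRD : path R v0 rest.
  apply: (sub_in_path eR) pD; apply/allP => y yD; change (y \in S).
  by rewrite in_limb_support yD.
have pRP : path R vi p.
  apply: (sub_in_path eR) pp; apply/allP => y yP; change (y \in S).
  by rewrite in_limb_support yP orbT.
have from_v0 y : y \in S -> connect R v0 y.
  rewrite in_limb_support => /orP[yD|yP]; first exact: path_connect pRD _ yD.
  exact: connect_trans (path_connect pRD viD) (path_connect pRP yP).
by move=> /from_v0 + /from_v0; rewrite Rsym; apply: connect_trans.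
Qed.

Lemma card_limb_ball_off x : x \notin S -> #|S :&: ball e x 1| <= 1.
Proof.
move=> xS; apply/card_le1_eqP => y1 y2; rewrite !in_setI !in_set -!in_limb_support.
have edge y : y \in S -> dist x y <= 1 -> e x y.
  move=> yS dy; apply: (edge_dist1 econn); apply/eqP; rewrite eqn_leq dy lt0n.
  by apply: contraNneq xS => /(dist_eq0 econn) ->.
move=> /andP[y1S d1] /andP[y2S d2]; apply: esym.
apply: (acyclic_unique_neighbour Htree xS y1S (edge _ y1S d1) (edge _ y2S d2)).
exact: limb_support_connected.
Qed.

Lemma card_limb_ball_le g x : (forall v, g v <= fb v) -> 0 < g x ->
  #|S :&: ball e x (g x)| <= g x + (x \in [set v0; vd; u]).
Proof.
move=> gfb gx; have := gfb x; rewrite !inE.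
have below n : g x <= n.-1 -> g x < n by clear -gx; lia.
have [xv0|xv0] := eqVneq x v0.
  subst x; rewrite limb_broadcast_v0 /= addn1 => /below lt.
  exact: card_limb_ball_end pD uD (frefl _) _ lt.
have [xvd|xvd] := eqVneq x vd.
  subst x; rewrite limb_broadcast_vd /= addn1 => /below lt.
  exact: card_limb_ball_end pD' uD' D'D _ lt.
have [xu|xu] := eqVneq x u.
  by subst x; rewrite limb_broadcast_u addn1; apply: card_limb_ball_tip.
rewrite addn0 /fb (negbTE xv0) (negbTE xvd) (negbTE xu).
have [xS|xS] := boolP (x \in S); first by rewrite leqNgt gx.
move=> gx1.
have -> : g x = 1 by apply/eqP; rewrite eqn_leq gx1 gx.
exact: card_limb_ball_off.
Qed.

Lemma cost_ge_below_limb_broadcast g : dominatingb e g -> (forall v, g v <= fb v) ->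
  diam e + l <= cost g + 2.
Proof.
move=> dg gfb; rewrite -(leq_add2r 1) -card_limb_support -addnA.
apply: leq_trans (card_le_sum_ball S sym_e econn dg) _.
apply: (@leq_trans (\sum_(x | 0 < g x) (g x + (x \in [set v0; vd; u])))).
  by apply: leq_sum => x; apply: card_limb_ball_le.
rewrite big_split leq_add //.
  by rewrite [cost g](bigID (fun x => 0 < g x)) leq_addr.
have hubs : #|[set v0; vd; u]| <= 3 by rewrite !cardsU !cards1; lia.
apply: leq_trans hubs; rewrite -sum1_card big_mkcond [X in _ <= X]big_mkcond /=.
by apply: leq_sum => x _; case: (0 < g x); case: (x \in _).
Qed.

Lemma diam_lt_Gamma_b : diam e < Gamma_b e.
Proof.
apply: Gamma_b_ge limb_broadcast_broadcast limb_broadcast_dominating _ => g dg gfb.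
rewrite -(leq_add2r 2); apply: leq_trans (cost_ge_below_limb_broadcast dg gfb).
by rewrite addSn -addnS leq_add2l.
Qed.

End Limb.

Theorem mainTheorem8 (T : finType) (e : rel T) (v0 : T) (rest : seq T)
    (u vi : T) (l : nat) :
  tree e ->
  diametral_path e v0 rest ->
  protrudes_from e (v0 :: rest) u vi ->
  dist e u vi = l ->
  2 < l ->
  ~ diametrical e.
Proof.
move=> Htree diametralD protrudes <- long diametral_e.
have [[sym_e _] econn _] := Htree.
have [p [sp pp lp]] := exists_geodesic econn vi u.
have long' : 2 < size p by rewrite sp (dist_sym econn sym_e).
have := diam_lt_Gamma_b Htree diametralD protrudes pp lp (esym sp) long'.
by rewrite diametral_e ltnn.
Qed.
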